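(* Let $(D,\mu)$ be an associative algebra over a field $k$, $\alpha:D\to D$ an algebra endomorphism, and $T:D\otimes D\to D\otimes D$ a pseudotwistor with companions $\tilde T_1,\tilde T_2$, i.e. linear maps $\tilde T_1,\tilde T_2:D^{\otimes 3}\to D^{\otimes 3}$ with $T\circ(\mathrm{id}_D\otimes\mu)=(\mathrm{id}_D\otimes\mu)\circ\tilde T_1\circ(T\otimes\mathrm{id}_D)$, $T\circ(\mu\otimes\mathrm{id}_D)=(\mu\otimes\mathrm{id}_D)\circ\tilde T_2\circ(\mathrm{id}_D\otimes T)$ and $\tilde T_1\circ(T\otimes\mathrm{id}_D)\circ(\mathrm{id}_D\otimes T)=\tilde T_2\circ(\mathrm{id}_D\otimes T)\circ(T\otimes\mathrm{id}_D)$. Assume moreover $(\alpha\otimes\alpha)\circ T=T\circ(\alpha\otimes\alpha)$. Consider the associative algebra $D^T=(D,\mu\circ T)$ and the Hom-associative algebra $D_\alpha=(D,\alpha\circ\mu,\alpha)$. Then $T$ is a Hom-pseudotwistor for $D_\alpha$ with companions $\tilde T_1,\tilde T_2$, the map $\alpha$ is an algebra endomorphism of $D^T$, and the Hom-associative algebras $(D_\alpha)^T=(D,(\alpha\circ\mu)\circ T,\alpha)$ and $(D^T)_\alpha=(D,\alpha\circ(\mu\circ T),\alpha)$ coincide. In particular, if $T$ is a twistor for $D$, then $T$ is a Hom-twistor for $D_\alpha$.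
   Context: Algebras are over $k$ and not assumed unital. A Hom-associative algebra is $(A,\mu,\alpha)$ with $\alpha(aa')=\alpha(a)\alpha(a')$ and $\alpha(a)(a'a'')=(aa')\alpha(a'')$. For a Hom-associative algebra $(D,\mu,\alpha)$, a linear $T:D\otimes D\to D\otimes D$ is a Hom-pseudotwistor with companions $\tilde T_1,\tilde T_2:D^{\otimes3}\to D^{\otimes 3}$ if $(\alpha\otimes\alpha)\circ T=T\circ(\alpha\otimes\alpha)$, $T\circ(\alpha\otimes\mu)=(\alpha\otimes\mu)\circ\tilde T_1\circ(T\otimes\mathrm{id})$, $T\circ(\mu\otimes\alpha)=(\mu\otimes\alpha)\circ\tilde T_2\circ(\mathrm{id}\otimes T)$, $\tilde T_1\circ(T\otimes\mathrm{id})\circ(\mathrm{id}\otimes T)=\tilde T_2\circ(\mathrm{id}\otimes T)\circ(T\otimes\mathrm{id})$; then $(D,\mu\circ T,\alpha)$ is Hom-associative. Write $T(d\otimes d')=d^T\otimes d'_T$, $T_{12}=T\otimes\mathrm{id}$, $T_{23}=\mathrm{id}\otimes T$, $T_{13}(d\otimes d'\otimes d'')=d^T\otimes d'\otimes d''_T$. For an associative algebra $(D,\mu)$, a twistor is a linear $T$ with $T\circ(\mathrm{id}\otimes\mu)=(\mathrm{id}\otimes\mu)\circ T_{13}\circ T_{12}$, $T\circ(\mu\otimes\mathrm{id})=(\mu\otimes\mathrm{id})\circ T_{13}\circ T_{23}$, $T_{12}\circ T_{23}=T_{23}\circ T_{12}$. For a Hom-associative algebra $(D,\mu,\alpha)$,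 a Hom-twistor is a linear $T$ with $(\alpha\otimes\alpha)\circ T=T\circ(\alpha\otimes\alpha)$, $T\circ(\alpha\otimes\mu)=(\alpha\otimes\mu)\circ T_{13}\circ T_{12}$, $T\circ(\mu\otimes\alpha)=(\mu\otimes\alpha)\circ T_{13}\circ T_{23}$, $T_{12}\circ T_{23}=T_{23}\circ T_{12}$. It is known that $D^T$ is associative for a pseudotwistor $T$, and $D_\alpha$ is Hom-associative for an algebra endomorphism $\alpha$. *)

(* Tensor products are not in the library: D ⊗ D and
   D ⊗ D ⊗ D are given by their universal properties. *)
From HB Require Import structures.
From mathcomp Require Import all_boot all_algebra.
From Stdlib Require Import ClassicalEpsilon.
Set Implicit Arguments. Unset Strict Implicit. Unset Printing Implicit Defensive.
Import GRing.Theory.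
Local Open Scope ring_scope.

Definition islinear {k : fieldType} {U V : lmodType k} (f : U -> V) : Prop :=
  forall (r : k) (x y : U), f (r *: x + y) = r *: f x + f y.

Definition isbilinear {k : fieldType} {U V W : lmodType k} (f : U -> V -> W) : Prop :=
  (forall b, islinear (fun a => f a b)) /\ (forall a, islinear (f a)).

Definition istrilinear {k : fieldType} {U V X W : lmodType k}
  (f : U -> V -> X -> W) : Prop :=
  (forall b c, islinear (fun a => f a b c)) /\ (forall a c, islinear (fun b => f a b c))
  /\ (forall a b, islinear (f a b)).

Definition is_tensor2 {k : fieldType} {D D2 : lmodType k} (t2 : D -> D -> D2) : Prop :=
  isbilinear t2 /\
  (forall (W : lmodType k) (f : D -> D -> W), isbilinear f ->
     exists g : D2 -> W, islinear g /\ forall a b, g (t2 a b) = f a b) /\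
  (forall (W : lmodType k) (g h : D2 -> W), islinear g -> islinear h ->
     (forall a b, g (t2 a b) = h (t2 a b)) -> g = h).

Definition is_tensor3 {k : fieldType} {D D3 : lmodType k} (t3 : D -> D -> D -> D3) : Prop :=
  istrilinear t3 /\
  (forall (W : lmodType k) (f : D -> D -> D -> W), istrilinear f ->
     exists g : D3 -> W, islinear g /\ forall a b c, g (t3 a b c) = f a b c) /\
  (forall (W : lmodType k) (g h : D3 -> W), islinear g -> islinear h ->
     (forall a b c, g (t3 a b c) = h (t3 a b c)) -> g = h).

Definition ext2 {k : fieldType} {D D2 W : lmodType k} (t2 : D -> D -> D2)
  (f : D -> D -> W) : D2 -> W :=
  epsilon (inhabits (fun _ => 0)) (fun g => islinear g /\ forall a b, g (t2 a b) = f a b).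

Definition ext3 {k : fieldType} {D D3 W : lmodType k} (t3 : D -> D -> D -> D3)
  (f : D -> D -> D -> W) : D3 -> W :=
  epsilon (inhabits (fun _ => 0))
    (fun g => islinear g /\ forall a b c, g (t3 a b c) = f a b c).

Definition tmap2 {k : fieldType} {D D2 : lmodType k} (t2 : D -> D -> D2)
  (f g : D -> D) : D2 -> D2 := ext2 t2 (fun a b => t2 (f a) (g b)).

Definition tmap3l {k : fieldType} {D D2 D3 : lmodType k} (t2 : D -> D -> D2)
  (t3 : D -> D -> D -> D3) (f : D -> D) (m : D -> D -> D) : D3 -> D2 :=
  ext3 t3 (fun a b c => t2 (f a) (m b c)).

Definition tmap3r {k : fieldType} {D D2 D3 : lmodType k} (t2 : D -> D -> D2)
  (t3 : D -> D -> D -> D3) (m : D -> D -> D) (f : D -> D) : D3 -> D2 :=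
  ext3 t3 (fun a b c => t2 (m a b) (f c)).

Definition T12 {k : fieldType} {D D2 D3 : lmodType k} (t2 : D -> D -> D2)
  (t3 : D -> D -> D -> D3) (T : D2 -> D2) : D3 -> D3 :=
  ext3 t3 (fun a b c => ext2 t2 (fun x y => t3 x y c) (T (t2 a b))).

Definition T23 {k : fieldType} {D D2 D3 : lmodType k} (t2 : D -> D -> D2)
  (t3 : D -> D -> D -> D3) (T : D2 -> D2) : D3 -> D3 :=
  ext3 t3 (fun a b c => ext2 t2 (fun x y => t3 a x y) (T (t2 b c))).

Definition T13 {k : fieldType} {D D2 D3 : lmodType k} (t2 : D -> D -> D2)
  (t3 : D -> D -> D -> D3) (T : D2 -> D2) : D3 -> D3 :=
  ext3 t3 (fun a b c => ext2 t2 (fun x y => t3 x b y) (T (t2 a c))).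

Definition twist_mul {k : fieldType} {D D2 : lmodType k} (t2 : D -> D -> D2)
  (m : D -> D -> D) (T : D2 -> D2) : D -> D -> D :=
  fun a b => ext2 t2 m (T (t2 a b)).

Definition Pseudotwistor {k : fieldType} {D D2 D3 : lmodType k} (t2 : D -> D -> D2)
  (t3 : D -> D -> D -> D3) (m : D -> D -> D) (T : D2 -> D2) (T1 T2 : D3 -> D3) : Prop :=
  islinear T /\ islinear T1 /\ islinear T2 /\
   T \o tmap3l t2 t3 id m = tmap3l t2 t3 id m \o T1 \o T12 t2 t3 T /\
   T \o tmap3r t2 t3 m id = tmap3r t2 t3 m id \o T2 \o T23 t2 t3 T /\
   T1 \o T12 t2 t3 T \o T23 t2 t3 T = T2 \o T23 t2 t3 T \o T12 t2 t3 T.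

Definition HomPseudotwistor {k : fieldType} {D D2 D3 : lmodType k} (t2 : D -> D -> D2)
  (t3 : D -> D -> D -> D3) (m : D -> D -> D) (al : D -> D) (T : D2 -> D2)
  (T1 T2 : D3 -> D3) : Prop :=
  islinear T /\ islinear T1 /\ islinear T2 /\
   tmap2 t2 al al \o T = T \o tmap2 t2 al al /\
   T \o tmap3l t2 t3 al m = tmap3l t2 t3 al m \o T1 \o T12 t2 t3 T /\
   T \o tmap3r t2 t3 m al = tmap3r t2 t3 m al \o T2 \o T23 t2 t3 T /\
   T1 \o T12 t2 t3 T \o T23 t2 t3 T = T2 \o T23 t2 t3 T \o T12 t2 t3 T.

Definition Twistor {k : fieldType} {D D2 D3 : lmodType k} (t2 : D -> D -> D2)
  (t3 : D -> D -> D -> D3) (m : D -> D -> D) (T : D2 -> D2) : Prop :=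
  islinear T /\
   T \o tmap3l t2 t3 id m = tmap3l t2 t3 id m \o T13 t2 t3 T \o T12 t2 t3 T /\
   T \o tmap3r t2 t3 m id = tmap3r t2 t3 m id \o T13 t2 t3 T \o T23 t2 t3 T /\
   T12 t2 t3 T \o T23 t2 t3 T = T23 t2 t3 T \o T12 t2 t3 T.

Definition HomTwistor {k : fieldType} {D D2 D3 : lmodType k} (t2 : D -> D -> D2)
  (t3 : D -> D -> D -> D3) (m : D -> D -> D) (al : D -> D) (T : D2 -> D2) : Prop :=
  islinear T /\
   tmap2 t2 al al \o T = T \o tmap2 t2 al al /\
   T \o tmap3l t2 t3 al m = tmap3l t2 t3 al m \o T13 t2 t3 T \o T12 t2 t3 T /\
   T \o tmap3r t2 t3 m al = tmap3r t2 t3 m al \o T13 t2 t3 T \o T23 t2 t3 T /\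
   T12 t2 t3 T \o T23 t2 t3 T = T23 t2 t3 T \o T12 t2 t3 T.

Definition AlgEndo {k : fieldType} {D : lmodType k} (m : D -> D -> D) (al : D -> D) : Prop :=
  islinear al /\ forall a b, al (m a b) = m (al a) (al b).

(* All four claims reduce to identities between linear maps out of D ⊗ D and
   D ⊗ D ⊗ D, which the universal properties let us check on pure tensors.
   On pure tensors, [id ⊗ (α ∘ μ)] and [(α ∘ μ) ⊗ α] split as [(α ⊗ α) ∘ (id ⊗ μ)]
   and [(α ⊗ α) ∘ (μ ⊗ id)], and [μ ∘ (α ⊗ α) = α ∘ μ]; since [α ⊗ α] commutes
   with [T], each (Hom-)twisting axiom for [D_α] follows from the corresponding
   axiom for [D] by composing with [α ⊗ α]. *)
From mathcomp Require Import all_boot all_algebra.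
From Stdlib Require Import ClassicalEpsilon FunctionalExtensionality.
Set Implicit Arguments.
Unset Strict Implicit.
Unset Printing Implicit Defensive.

Import GRing.Theory.
Local Open Scope ring_scope.

Lemma islinear_comp (k : fieldType) (U V W : lmodType k) (f : V -> W) (g : U -> V) :
  islinear f -> islinear g -> islinear (f \o g).
Proof. by move=> Hf Hg r x y /=; rewrite Hg Hf. Qed.

Lemma islinear_id (k : fieldType) (U : lmodType k) : islinear (@id U).
Proof. by []. Qed.

Lemma isbilinear_comp (k : fieldType) (U V W X : lmodType k)
    (g : W -> X) (m : U -> V -> W) :
  islinear g -> isbilinear m -> isbilinear (fun a b => g (m a b)).
Proof. by move=> Hg [Hm1 Hm2]; split=> ? r x y /=; rewrite ?Hm1 ?Hm2 Hg. Qed.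

Lemma comp_intertwine (A B : Type) (T S : B -> B) (M : A -> B) (X : A -> A) :
  T \o M = M \o X -> S \o T = T \o S -> T \o (S \o M) = (S \o M) \o X.
Proof.
move=> TM ST; apply: functional_extensionality => x /=.
by rewrite -[T (S _)]/((T \o S) _) -ST /= -[T (M x)]/((T \o M) x) TM.
Qed.

Section TensorMaps.

Variables (k : fieldType) (D D2 D3 : lmodType k).
Variables (t2 : D -> D -> D2) (t3 : D -> D -> D -> D3).
Hypotheses (tensor2_t2 : is_tensor2 t2) (tensor3_t3 : is_tensor3 t3).

Let bilinear_t2 : isbilinear t2. Proof. by case: tensor2_t2. Qed.

Lemma ext2P (W : lmodType k) (f : D -> D -> W) : isbilinear f ->
  islinear (ext2 t2 f) /\ forall a b, ext2 t2 f (t2 a b) = f a b.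
Proof.
move=> Hf; have [_ [ex_ext _]] := tensor2_t2.
by rewrite /ext2; apply epsilon_spec; exact: ex_ext.
Qed.

Lemma ext3P (W : lmodType k) (f : D -> D -> D -> W) : istrilinear f ->
  islinear (ext3 t3 f) /\ forall a b c, ext3 t3 f (t3 a b c) = f a b c.
Proof.
move=> Hf; have [_ [ex_ext _]] := tensor3_t3.
by rewrite /ext3; apply epsilon_spec; exact: ex_ext.
Qed.

Lemma tensor2_ext (W : lmodType k) (g h : D2 -> W) :
  islinear g -> islinear h -> (forall a b, g (t2 a b) = h (t2 a b)) -> g = h.
Proof. by have [_ [_ uniq]] := tensor2_t2; exact: uniq. Qed.

Lemma tensor3_ext (W : lmodType k) (g h : D3 -> W) :
  islinear g -> islinear h -> (forall a b c, g (t3 a b c) = h (t3 a b c)) -> g = h.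
Proof. by have [_ [_ uniq]] := tensor3_t3; exact: uniq. Qed.

Lemma tmap2P (f g : D -> D) : islinear f -> islinear g ->
  islinear (tmap2 t2 f g) /\ forall a b, tmap2 t2 f g (t2 a b) = t2 (f a) (g b).
Proof.
have [Ht1 Ht2] := bilinear_t2; move=> Hf Hg.
by apply: ext2P; split=> ? r x y /=; rewrite ?Hf ?Hg ?Ht1 ?Ht2.
Qed.

Lemma tmap3lP (f : D -> D) (m : D -> D -> D) : islinear f -> isbilinear m ->
  islinear (tmap3l t2 t3 f m) /\
  forall a b c, tmap3l t2 t3 f m (t3 a b c) = t2 (f a) (m b c).
Proof.
have [Ht1 Ht2] := bilinear_t2; move=> Hf [Hm1 Hm2].
by apply: ext3P; split; [|split] => ? ? r x y /=; rewrite ?Hf ?Hm1 ?Hm2 ?Ht1 ?Ht2.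
Qed.

Lemma tmap3rP (m : D -> D -> D) (f : D -> D) : islinear f -> isbilinear m ->
  islinear (tmap3r t2 t3 m f) /\
  forall a b c, tmap3r t2 t3 m f (t3 a b c) = t2 (m a b) (f c).
Proof.
have [Ht1 Ht2] := bilinear_t2; move=> Hf [Hm1 Hm2].
by apply: ext3P; split; [|split] => ? ? r x y /=; rewrite ?Hf ?Hm1 ?Hm2 ?Ht1 ?Ht2.
Qed.

Section Composition.

Variables (f g : D -> D) (m : D -> D -> D).
Hypotheses (linear_f : islinear f) (linear_g : islinear g) (bilinear_m : isbilinear m).

Lemma tmap3l_comp :
  tmap3l t2 t3 f (fun a b => g (m a b)) = tmap2 t2 f g \o tmap3l t2 t3 id m.
Proof.
have [Lfg Efg] := tmap2P linear_f linear_g.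
have [L E] := tmap3lP (@islinear_id _ D) bilinear_m.
have [L' E'] := tmap3lP linear_f (isbilinear_comp linear_g bilinear_m).
apply: tensor3_ext => //; first exact: islinear_comp.
by move=> a b c /=; rewrite E E' Efg.
Qed.

Lemma tmap3r_comp :
  tmap3r t2 t3 (fun a b => g (m a b)) f = tmap2 t2 g f \o tmap3r t2 t3 m id.
Proof.
have [Lgf Egf] := tmap2P linear_g linear_f.
have [L E] := tmap3rP (@islinear_id _ D) bilinear_m.
have [L' E'] := tmap3rP linear_f (isbilinear_comp linear_g bilinear_m).
apply: tensor3_ext => //; first exact: islinear_comp.
by move=> a b c /=; rewrite E E' Egf.
Qed.

Lemma ext2_comp : ext2 t2 (fun a b => g (m a b)) = g \o ext2 t2 m.
Proof.
have [L E] := ext2P bilinear_m.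
have [L' E'] := ext2P (isbilinear_comp linear_g bilinear_m).
by apply: tensor2_ext => //; [exact: islinear_comp | move=> a b /=; rewrite E E'].
Qed.

Lemma twist_mul_comp (T : D2 -> D2) :
  twist_mul t2 (fun a b => g (m a b)) T = (fun a b => g (twist_mul t2 m T a b)).
Proof. by rewrite /twist_mul ext2_comp. Qed.

End Composition.

Section Endomorphism.

Variables (f : D -> D) (m : D -> D -> D).
Hypotheses (linear_f : islinear f) (bilinear_m : isbilinear m).

Lemma ext2_tmap2_endo : AlgEndo m f -> ext2 t2 m \o tmap2 t2 f f = f \o ext2 t2 m.
Proof.
move=> [_ f_mul]; have [L E] := ext2P bilinear_m.
have [Lff Eff] := tmap2P linear_f linear_f.
by apply: tensor2_ext; try exact: islinear_comp; move=> a b /=; rewrite Eff !E f_mul.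
Qed.

Lemma twist_mul_endo (T : D2 -> D2) :
  AlgEndo m f -> tmap2 t2 f f \o T = T \o tmap2 t2 f f -> AlgEndo (twist_mul t2 m T) f.
Proof.
move=> endo_f fT; split=> // a b; rewrite /twist_mul.
have [_ Eff] := tmap2P linear_f linear_f.
rewrite -Eff -[T (tmap2 _ _ _ _)]/((T \o tmap2 t2 f f) _) -fT /=.
by rewrite -[ext2 t2 m (tmap2 _ _ _ _)]/((ext2 t2 m \o tmap2 t2 f f) _) ext2_tmap2_endo.
Qed.

Variables (T : D2 -> D2) (X : D3 -> D3).
Hypothesis fT : tmap2 t2 f f \o T = T \o tmap2 t2 f f.

Lemma tmap3l_hom : T \o tmap3l t2 t3 id m = tmap3l t2 t3 id m \o X ->
  T \o tmap3l t2 t3 f (fun a b => f (m a b)) = tmap3l t2 t3 f (fun a b => f (m a b)) \o X.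
Proof. by move=> TX; rewrite tmap3l_comp //; exact: comp_intertwine. Qed.

Lemma tmap3r_hom : T \o tmap3r t2 t3 m id = tmap3r t2 t3 m id \o X ->
  T \o tmap3r t2 t3 (fun a b => f (m a b)) f = tmap3r t2 t3 (fun a b => f (m a b)) f \o X.
Proof. by move=> TX; rewrite tmap3r_comp //; exact: comp_intertwine. Qed.

End Endomorphism.

End TensorMaps.

Theorem proposition2p4 (k : fieldType) (D D2 D3 : lmodType k)
  (t2 : D -> D -> D2) (t3 : D -> D -> D -> D3)
  (mul : D -> D -> D) (al : D -> D) (T : D2 -> D2) :
  is_tensor2 t2 -> is_tensor3 t3 ->
  isbilinear mul -> (forall a b c, mul a (mul b c) = mul (mul a b) c) ->
  AlgEndo mul al ->
  islinear T ->
  tmap2 t2 al al \o T = T \o tmap2 t2 al al ->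
  (forall T1 T2 : D3 -> D3, Pseudotwistor t2 t3 mul T T1 T2 ->
     [/\ HomPseudotwistor t2 t3 (fun a b => al (mul a b)) al T T1 T2,
         AlgEndo (twist_mul t2 mul T) al &
         twist_mul t2 (fun a b => al (mul a b)) T
           = (fun a b => al (twist_mul t2 mul T a b))]) /\
  (Twistor t2 t3 mul T -> HomTwistor t2 t3 (fun a b => al (mul a b)) al T).
Proof.
move=> tensor2_t2 tensor3_t3 bilinear_mul _ endo_al linear_T alT.
have linear_al : islinear al by case: endo_al.
have hom_l := tmap3l_hom tensor2_t2 tensor3_t3 linear_al bilinear_mul alT.
have hom_r := tmap3r_hom tensor2_t2 tensor3_t3 linear_al bilinear_mul alT.
split=> [T1 T2 [_ [L1 [L2 [TL [TR T12_T23]]]]] | [_ [TL [TR T12_T23]]]].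
  split.
  - by do !split=> //; [exact: hom_l | exact: hom_r].
  - exact: twist_mul_endo.
  - exact: twist_mul_comp.
by do !split=> //; [exact: hom_l | exact: hom_r].
Qed.
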